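(* Fix $N\ge 1$, a statistic $c$ and a real $\theta>0$, and consider the weighted game of best choice. Let $A$ be the set of positive prefixes that are minimal with respect to prefix containment, i.e. positive prefixes $p$ such that no prefix $p'\neq p$ contained in $p$ is positive. Then every $\pi\in\mathfrak S_N$ is $p$-prefixed for exactly one $p\in A$, and the strategy ''accept candidate $i$ as soon as the current prefix flattening $\pi^{(i)}$ belongs to $A$'' maximizes the probability of winning among all strategies. The maximal winning probability equals $\bar S(1)$, where $1\in\mathfrak S_1$, and also equals $$\frac{\sum_{p\in A} D(p)\,S(p)}{\sum_{\sigma\in\mathfrak S_N}\theta^{c(\sigma)}}.$$
   Context: Permutations of $\{1,\dots,m\}$ are written in one-line notation $\pi=\pi_1\pi_2\cdots\pi_m$; $\mathfrak S_m$ is the set of all of them. An entry $\pi_j$ is a left-to-right maximum of $\pi$ if $\pi_j>\pi_i$ for all $i<j$. A statistic is a function $c:\bigcup_{m=1}^N\mathfrak S_m\to\mathbb Z_{\ge0}$. Fix $N\ge1$, a statistic $c$ and a real $\theta>0$. The weighted game of best choice is played as follows. A permutation $\pi\in\mathfrak S_N$ is chosen with probability $\theta^{c(\pi)}/\sum_{\sigma\in\mathfrak S_N}\theta^{c(\sigma)}$. For $i=1,\dots,N$, the player is shown the $i$-th prefix flattening $\pi^{(i)}$, which is the unique element of $\mathfrak S_i$ with the same relative order as $\pi_1,\dots,\pi_i$. Using only this information (note that $\pi^{(i)}$ determines $\pi^{(1)},\dots,\pi^{(i-1)}$), the player decides whether to accept candidate $i$, which ends the game, or to reject it. If candidates $1,\dots,N-1$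 are all rejected, candidate $N$ is accepted. The player wins iff the accepted candidate $i$ has $\pi_i=N$. A strategy is any such decision rule. A prefix is an element of $\bigcup_{m=1}^N\mathfrak S_m$. For $p\in\mathfrak S_m$ and $\pi\in\mathfrak S_N$: - $\pi$ is $p$-prefixed if $\pi^{(m)}=p$; - $\pi$ is $p$-winnable if $\pi$ is $p$-prefixed and $\pi_m=N$. A prefix $r\in\mathfrak S_n$ contains a prefix $p\in\mathfrak S_m$ ($m\le n$) if the $m$-th prefix flattening of $r$ equals $p$. Define: - $D(p)=\sum_{p\text{-prefixed }\pi}\theta^{c(\pi)}$; - the strike probability $S(p)=\big(\sum_{p\text{-winnable }\pi}\theta^{c(\pi)}\big)/D(p)$; - the open probability $S^{c}(p)$: it equals $0$ if $p\in\mathfrak S_N$, and for $p\in\mathfrak S_m$ with $m<N$ it equals $S^{c}(p)=\big(\sum_{q\in\mathfrak S_{m+1},\,q\text{ contains }p}D(q)\bar S(q)\big)/D(p)$; - the closed probability $\bar S(p)=\max(S(p),S^c(p))$. Equivalently, $S^c(p)$ (resp. $\bar S(p)$) is the largest conditional probability of winning, given that $\pi$ is $p$-prefixed, over strategies that reject candidates $1,\dots,m$ (resp. $1,\dots,m-1$). A prefix $p$ is positive if $S(p)\ge S^c(p)$, and negative otherwise. *)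

From HB Require Import structures.
From mathcomp Require Import all_boot all_order all_algebra.
Set Implicit Arguments. Unset Strict Implicit. Unset Printing Implicit Defensive.
Import Order.TTheory GRing.Theory Num.Theory.
Local Open Scope ring_scope.

(* Permutations of {1,...,m} are represented in one-line notation as
   sequences of naturals; S_m is enumerated (without duplicates) by
   [Sm m := permutations (iota 1 m)]. *)
Definition Sm (m : nat) : seq (seq nat) := permutations (iota 1 m).

Definition flat (s : seq nat) : seq nat :=
  map (fun x => count (fun y => (y <= x)%N) s) s.

Definition pref (i : nat) (pi : seq nat) : seq nat := flat (take i pi).

Definition contains (r p : seq nat) : bool :=
  (size p <= size r)%N && (pref (size p) r == p).

Section Game.
Context {R : realFieldType} (N : nat) (c : seq nat -> nat) (theta : R).

Definition is_prefix (p : seq nat) : bool :=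
  [&& (1 <= size p)%N, (size p <= N)%N & p \in Sm (size p)].

Definition weight (pi : seq nat) : R := theta ^+ c pi.

Definition prefixed (p pi : seq nat) : bool := pref (size p) pi == p.
Definition winnable (p pi : seq nat) : bool :=
  prefixed p pi && (nth 0%N pi (size p).-1 == N).

Definition D (p : seq nat) : R := \sum_(pi <- Sm N | prefixed p pi) weight pi.

Definition Sstrike (p : seq nat) : R :=
  (\sum_(pi <- Sm N | winnable p pi) weight pi) / D p.

Fixpoint Sc_rec (k : nat) (p : seq nat) : R :=
  match k with
  | 0%N => 0
  | k'.+1 => (\sum_(q <- Sm (size p).+1 | contains q p)
                D q * Num.max (Sstrike q) (Sc_rec k' q)) / D p
  end.

Definition Sopen (p : seq nat) : R := Sc_rec (N - size p) p.
Definition Sclosed (p : seq nat) : R := Num.max (Sstrike p) (Sopen p).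

Definition positive (p : seq nat) : bool := Sopen p <= Sstrike p.

Definition inA (p : seq nat) : bool :=
  is_prefix p && positive p &&
  ~~ has (fun m => has (fun p' => contains p p' && (p' != p) && positive p')
                       (Sm m)) (iota 1 N).

(* A strategy: decision (accept = true) as a function of the current prefix
   flattening pi^(i).  The accepted candidate is the first i in 1..N-1 with
   tau (pi^(i)) = true, and N if there is none. *)
Definition accepted (tau : seq nat -> bool) (pi : seq nat) : nat :=
  (find (fun i => (N <= i)%N || tau (pref i pi)) (iota 1 N)).+1.

Definition wins (tau : seq nat -> bool) (pi : seq nat) : bool :=
  nth 0%N pi (accepted tau pi).-1 == N.

Definition Ztot : R := \sum_(pi <- Sm N) weight pi.

Definition win_prob (tau : seq nat -> bool) : R :=
  (\sum_(pi <- Sm N | wins tau pi) weight pi) / Ztot.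

End Game.

From HB Require Import structures.
From mathcomp Require Import all_boot all_order all_algebra.
Import Order.TTheory GRing.Theory Num.Theory.

(* The proof is a backward-induction (Bellman) argument on prefixes.
   1. Combinatorics of flattening: flattening a prefix of a flattening is the
      flattening of the shorter prefix, and prefix flattenings of elements of
      S_N lie in S_k.  Hence the p-prefixed permutations are partitioned by
      their (|p|+1)-th prefix flattening q, ranging over the q that contain p.
   2. For a strategy tau and a prefix p let [tau_mass tau p] be the weight of
      the p-prefixed permutations won by tau when candidates 1..|p|-1 have
      been rejected.  Unfolding one decision gives either the strike mass
      D(p) S(p) or the sum of tau_mass over the children q of p.
   3. Induction on N - |p| then shows tau_mass tau p <= D(p) Sbar(p), with
      equality for the strategy "accept positive prefixes".
   4. Along any pi the first positive prefix flattening is the unique element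
      of A prefixing pi, so "accept prefixes in A" and "accept positive
      prefixes" stop at the same candidate; the three claims about the value
      follow, the last one by regrouping the winning weight by that prefix. *)

Lemma count_le_lt (t : seq nat) x y : x < y -> y \in t ->
  count (fun z => z <= x) t < count (fun z => z <= y) t.
Proof.
elim: t => [|z t IH] //= xy; rewrite inE => /orP [/eqP <-|yt].
  rewrite leqnn (leqNgt y x) xy /= add0n add1n ltnS.
  by apply: sub_count => v /= vx; apply: leq_trans vx (ltnW xy).
rewrite -addnS; apply: leq_add; last exact: IH.
by case zx: (z <= x) => //; rewrite (leq_trans zx (ltnW xy)).
Qed.

Lemma rank_leE {t : seq nat} {x y : nat} : x \in t -> y \in t ->
  (count (fun z => z <= y) t <= count (fun z => z <= x) t) = (y <= x).
Proof.
move=> xt yt; case: (leqP y x) => yx.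
  by apply: sub_count => v /= vy; apply: leq_trans vy yx.
by rewrite leqNgt count_le_lt.
Qed.

Lemma flat_map_mono (f : nat -> nat) (u : seq nat) :
  {in u &, forall x y, (f y <= f x) = (y <= x)} -> flat (map f u) = flat u.
Proof.
move=> f_mono; rewrite /flat -map_comp; apply/eq_in_map => x xu /=.
by rewrite count_map; apply: eq_in_count => y yu /=; apply: f_mono.
Qed.

Lemma pref_pref k n s : k <= n -> pref k (pref n s) = pref k s.
Proof.
move=> kn; rewrite /pref /flat -map_take -(take_takel s kn).
set t := take n s.
have := @flat_map_mono (fun x => count (fun y => y <= x) t) (take k t).
rewrite /flat => -> // x y /mem_take xt /mem_take yt; exact: rank_leE.
Qed.

Lemma size_flat s : size (flat s) = size s.
Proof. by rewrite /flat size_map. Qed.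

Lemma size_pref k s : k <= size s -> size (pref k s) = k.
Proof. by move=> ks; rewrite /pref size_flat size_takel. Qed.

Lemma size_Sm {m : nat} {q : seq nat} : q \in Sm m -> size q = m.
Proof. by rewrite /Sm mem_permutations => /perm_size ->; rewrite size_iota. Qed.

Lemma flat_Sm {u : seq nat} : uniq u -> flat u \in Sm (size u).
Proof.
move=> uu; rewrite /Sm mem_permutations.
have rank_inj : {in u &, injective (fun x => count (fun y => y <= x) u)}.
  move=> x y xu yu /= rxy; apply/eqP; rewrite eqn_leq.
  by rewrite -(rank_leE xu yu) -(rank_leE yu xu) rxy !leqnn.
have flat_uniq : uniq (flat u) by rewrite /flat map_inj_in_uniq.
have flat_sub : {subset flat u <= iota 1 (size u)}.
  move=> z /mapP [x xu ->]; rewrite mem_iota add1n ltnS count_size andbT.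
  by rewrite -has_count; apply/hasP; exists x.
have [|_ same_mem] := uniq_min_size flat_uniq flat_sub.
  by rewrite size_iota size_flat.
by apply: uniq_perm same_mem => //; apply: iota_uniq.
Qed.

Lemma pref_Sm {N pi k} : pi \in Sm N -> k <= N -> pref k pi \in Sm k.
Proof.
move=> piS kN; have uniq_pi : uniq pi.
  by move: piS; rewrite /Sm mem_permutations => /perm_uniq ->; apply: iota_uniq.
by have := flat_Sm (take_uniq k uniq_pi); rewrite size_takel // (size_Sm piS).
Qed.

Lemma prefixed1 {N pi} : 1 <= N -> pi \in Sm N -> prefixed [:: 1] pi.
Proof.
move=> hN /size_Sm; case: pi => [|x s] /= size_pi; first by rewrite -size_pi in hN.
by rewrite /prefixed /pref /flat /= leqnn take0.
Qed.

Lemma find_nthP (T : Type) (x0 : T) (a : pred T) (s : seq T) (k : nat) :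
  k < size s -> a (nth x0 s k) ->
  (forall j, j < k -> ~~ a (nth x0 s j)) -> find a s = k.
Proof.
elim: s k => [|x s IH] [|k] //= ks ak before; first by rewrite ak.
rewrite (negbTE (before 0 isT)); congr S; apply: IH => // j jk.
exact: (before j.+1).
Qed.

Local Open Scope ring_scope.

Lemma sum_pred1 (R : nmodType) (T : eqType) (r : seq T) (y : T) (a : R) :
  uniq r -> \sum_(x <- r) (if x == y then a else 0) = if y \in r then a else 0.
Proof.
move=> ur; case yr: (y \in r).
  rewrite (bigD1_seq y) //= eqxx big1_seq ?addr0 // => x /andP [xy _].
  by rewrite (negbTE xy).
by rewrite big1_seq // => x /andP [_ xr]; case: eqP => // xy; rewrite -xy xr in yr.
Qed.

Section Game.
Context {R : realFieldType} (N : nat) (c : seq nat -> nat) (theta : R)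
  (hN : (1 <= N)%N) (htheta : 0 < theta).

Local Notation w := (weight c theta).
Local Notation DD := (D N c theta).
Local Notation SS := (Sstrike N c theta).
Local Notation SO := (Sopen N c theta).
Local Notation SC := (Sclosed N c theta).
Local Notation pos := (positive N c theta).
Local Notation A := (inA N c theta).

Definition strike_mass (p : seq nat) : R :=
  \sum_(pi <- Sm N | winnable N p pi) w pi.

(* Candidate accepted by tau when candidates 1..m-1 have been rejected. *)
Definition accepted_from (tau : seq nat -> bool) (m : nat) (pi : seq nat) :=
  (m + find (fun i => (N <= i)%N || tau (pref i pi)) (iota m (N.+1 - m)))%N.

Definition tau_mass (tau : seq nat -> bool) (p : seq nat) : R :=
  \sum_(pi <- Sm N | prefixed p pi &&
          (nth 0%N pi (accepted_from tau (size p) pi).-1 == N)) w pi.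

Lemma w_gt0 pi : 0 < w pi.
Proof. exact: exprn_gt0. Qed.

Lemma w_ge0 pi : 0 <= w pi.
Proof. exact: ltW (w_gt0 pi). Qed.

Lemma D_ge0 p : 0 <= DD p.
Proof. by apply: sumr_ge0 => pi _; apply: w_ge0. Qed.

Lemma prefixed_mass_le_D p (F : pred (seq nat)) :
  \sum_(pi <- Sm N | prefixed p pi && F pi) w pi <= DD p.
Proof.
rewrite /D big_mkcond [X in _ <= X]big_mkcond; apply: ler_sum => pi _.
by case: (prefixed p pi) => //=; case: (F pi) => //; apply: w_ge0.
Qed.

Lemma prefixed_mass_D0 p (F : pred (seq nat)) : DD p = 0 ->
  \sum_(pi <- Sm N | prefixed p pi && F pi) w pi = 0.
Proof.
move=> D0; apply: le_anti; rewrite sumr_ge0 ?andbT => [|pi _]; last exact: w_ge0.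
by move: (prefixed_mass_le_D p F); rewrite D0.
Qed.

(* D(p) S(p) is the winnable mass, also when D(p) = 0. *)
Lemma D_Sstrike p : DD p * SS p = strike_mass p.
Proof.
rewrite /Sstrike -/(strike_mass p).
have [D0|Dn0] := eqVneq (DD p) 0; last by rewrite mulrC divfK.
by rewrite D0 mul0r; symmetry; apply: prefixed_mass_D0.
Qed.

(* Full-length prefixes have open probability 0, hence are positive. *)
Lemma positive_full p : size p = N -> pos p.
Proof.
move=> sp; rewrite /positive /Sopen sp subnn /=.
by apply: divr_ge0; [apply: sumr_ge0 => pi _; apply: w_ge0 | apply: D_ge0].
Qed.

Lemma accepted_from_N (tau : seq nat -> bool) pi : accepted_from tau N pi = N.
Proof. by rewrite /accepted_from subSnn /= leqnn addn0. Qed.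

Lemma accepted_from_S (tau : seq nat -> bool) m pi : (m < N)%N ->
  accepted_from tau m pi = if tau (pref m pi) then m else accepted_from tau m.+1 pi.
Proof.
move=> mN; rewrite /accepted_from subSS subSn ?(ltnW mN) //= (leqNgt N m) mN /=.
by case: (tau _); rewrite ?addn0 ?addSnnS.
Qed.

Lemma tau_mass_stop (tau : seq nat -> bool) p :
  (size p <= N)%N -> size p = N \/ tau p ->
  tau_mass tau p = strike_mass p.
Proof.
move=> sp stop; apply: eq_bigl => pi; rewrite /winnable.
case pi_p: (prefixed p pi) => //=.
suff -> : accepted_from tau (size p) pi = size p by [].
move: sp; rewrite leq_eqVlt => /orP [/eqP ->|lt]; first by rewrite accepted_from_N.
rewrite accepted_from_S // (eqP pi_p); case: stop => [sp|-> //].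
by move: lt; rewrite sp ltnn.
Qed.

Lemma prefixed_partition p (F : pred (seq nat)) (G : seq nat -> R) :
  (size p < N)%N ->
  \sum_(pi <- Sm N | prefixed p pi && F pi) G pi =
  \sum_(q <- Sm (size p).+1 | contains q p)
     \sum_(pi <- Sm N | prefixed q pi && F pi) G pi.
Proof.
move=> sp; under [RHS]eq_bigr do rewrite big_mkcond.
rewrite exchange_big /= big_mkcond big_seq [RHS]big_seq; apply: eq_bigr => pi piS.
set q0 := pref (size p).+1 pi.
have q0S : q0 \in Sm (size p).+1 by apply: pref_Sm piS sp.
have size_q0 : size q0 = (size p).+1 by rewrite size_pref // (size_Sm piS).
rewrite big_mkcond /= (bigD1_seq q0) //= ?permutations_uniq //.
rewrite big1_seq ?addr0 => [|q /andP [qq0 qS]]; last first.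
  by rewrite /prefixed (size_Sm qS) -/q0 eq_sym (negbTE qq0) /=; case: ifP.
have -> : prefixed q0 pi by rewrite /prefixed size_q0.
have -> : contains q0 p = prefixed p pi.
  by rewrite /contains size_q0 leqnSn /= /q0 pref_pref.
by case: (prefixed p pi).
Qed.

Lemma tau_mass_continue (tau : seq nat -> bool) p : (size p < N)%N -> ~~ tau p ->
  tau_mass tau p = \sum_(q <- Sm (size p).+1 | contains q p) tau_mass tau q.
Proof.
move=> sp reject.
have -> : tau_mass tau p = \sum_(pi <- Sm N | prefixed p pi &&
           (nth 0%N pi (accepted_from tau (size p).+1 pi).-1 == N)) w pi.
  apply: eq_bigl => pi; case pi_p: (prefixed p pi) => //=.
  by rewrite accepted_from_S // (eqP pi_p) (negbTE reject).
rewrite prefixed_partition // big_seq_cond [RHS]big_seq_cond.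
by apply: eq_bigr => q /andP [qS _]; rewrite /tau_mass (size_Sm qS).
Qed.

Lemma D_Sopen p : (size p < N)%N -> DD p != 0 ->
  DD p * SO p = \sum_(q <- Sm (size p).+1 | contains q p) DD q * SC q.
Proof.
move=> sp Dn0; rewrite /Sopen.
have [k Ek] : exists k, (N - size p = k.+1)%N.
  by exists (N - size p).-1; rewrite prednK // subn_gt0.
rewrite Ek /= mulrC divfK // big_seq_cond [RHS]big_seq_cond.
by apply: eq_bigr => q /andP [qS _]; rewrite /Sclosed /Sopen (size_Sm qS) subnS Ek.
Qed.

Lemma strike_mass_le_closed p : strike_mass p <= DD p * SC p.
Proof. by rewrite -D_Sstrike ler_wpM2l ?D_ge0 // /Sclosed le_max lexx. Qed.

Lemma tau_mass_le (tau : seq nat -> bool) p :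
  (size p <= N)%N -> tau_mass tau p <= DD p * SC p.
Proof.
move/subnKC; move: (N - size p)%N => k; elim: k p => [|k IH] p sp.
  rewrite addn0 in sp.
  by rewrite tau_mass_stop ?sp ?strike_mass_le_closed //; left.
have spN : (size p < N)%N by rewrite -sp addnS ltnS leq_addr.
have [D0|Dn0] := eqVneq (DD p) 0.
  by rewrite D0 mul0r -D0 prefixed_mass_le_D.
case accept: (tau p).
  by rewrite tau_mass_stop ?strike_mass_le_closed ?(ltnW spN) //; right.
rewrite tau_mass_continue ?accept //.
apply: (@le_trans _ _ (\sum_(q <- Sm (size p).+1 | contains q p) DD q * SC q)).
  rewrite big_seq_cond [X in _ <= X]big_seq_cond; apply: ler_sum => q /andP [qS _].
  by apply: IH; rewrite (size_Sm qS) addSnnS.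
by rewrite -D_Sopen // ler_wpM2l ?D_ge0 // /Sclosed le_max lexx orbT.
Qed.

Lemma positive_mass_eq p : (size p <= N)%N -> tau_mass pos p = DD p * SC p.
Proof.
move/subnKC; move: (N - size p)%N => k; elim: k p => [|k IH] p sp.
  rewrite addn0 in sp; rewrite tau_mass_stop ?sp //; last by left.
  by rewrite -D_Sstrike /Sclosed max_l //; apply: positive_full.
have spN : (size p < N)%N by rewrite -sp addnS ltnS leq_addr.
have [D0|Dn0] := eqVneq (DD p) 0.
  by rewrite D0 mul0r; apply: prefixed_mass_D0.
case p_pos: (pos p).
  rewrite tau_mass_stop ?(ltnW spN) -?D_Sstrike /Sclosed ?max_l //; by right.
have open_gt : SS p < SO p by rewrite ltNge; move: p_pos; rewrite /positive => ->.
rewrite tau_mass_continue ?p_pos // /Sclosed max_r ?(ltW open_gt) // D_Sopen //.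
rewrite big_seq_cond [RHS]big_seq_cond; apply: eq_bigr => q /andP [qS _].
by apply: IH; rewrite (size_Sm qS) addSnnS.
Qed.

(* All permutations are prefixed by 1, so the total weight is D(1). *)
Lemma Ztot_D1 : Ztot N c theta = DD [:: 1%N].
Proof.
rewrite /Ztot /D big_seq_cond [RHS]big_seq_cond; apply: eq_bigl => pi /=.
by rewrite andbT; case: (boolP (pi \in Sm N)) => //= piS; rewrite (prefixed1 hN piS).
Qed.

(* The identity permutation has positive weight. *)
Lemma Ztot_gt0 : 0 < Ztot N c theta.
Proof.
have idS : iota 1 N \in Sm N by rewrite /Sm mem_permutations perm_refl.
rewrite /Ztot (bigD1_seq (iota 1 N)) ?permutations_uniq //=.
rewrite (lt_le_trans (w_gt0 (iota 1 N))) // lerDl.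
by apply: sumr_ge0 => pi _; apply: w_ge0.
Qed.

Lemma win_prob_root (tau : seq nat -> bool) :
  win_prob N c theta tau = tau_mass tau [:: 1%N] / DD [:: 1%N].
Proof.
rewrite /win_prob Ztot_D1; congr (_ / _).
rewrite big_seq_cond [RHS]big_seq_cond; apply: eq_bigl => pi /=.
case: (boolP (pi \in Sm N)) => //= piS.
by rewrite (prefixed1 hN piS) /wins /accepted /accepted_from subn1 ?add1n.
Qed.

Lemma win_prob_le (tau : seq nat -> bool) : win_prob N c theta tau <= SC [:: 1%N].
Proof.
rewrite win_prob_root ler_pdivrMr -?Ztot_D1 ?Ztot_gt0 // Ztot_D1 mulrC.
exact: tau_mass_le.
Qed.

Lemma win_prob_positive : win_prob N c theta pos = SC [:: 1%N].
Proof.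
rewrite win_prob_root positive_mass_eq // -Ztot_D1 mulrC mulKf //.
by rewrite gt_eqF // Ztot_gt0.
Qed.

Definition first_positive (pi : seq nat) (i0 : nat) : Prop :=
  [/\ (1 <= i0 <= N)%N, pos (pref i0 pi) &
      forall j, (1 <= j < i0)%N -> ~~ pos (pref j pi)].

Lemma first_positive_exists { pi : seq nat } :
  pi \in Sm N -> exists i0, first_positive pi i0.
Proof.
move=> piS; have ex : exists m, (1 <= m <= N)%N && pos (pref m pi).
  by exists N; rewrite hN leqnn positive_full // size_pref // (size_Sm piS).
case: (ex_minnP ex) => m /andP [mr mpos] mmin.
exists m; split => // j /andP [j1 jm]; apply/negP => pj.
have := mmin j; rewrite j1 pj (leq_trans (ltnW jm)) ?(andP mr).2 //= => /(_ isT).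
by rewrite leqNgt jm.
Qed.

Lemma inA_pref pi i : pi \in Sm N -> (1 <= i <= N)%N ->
  A (pref i pi) = pos (pref i pi) && ~~ has (fun j => pos (pref j pi)) (iota 1 i.-1).
Proof.
move=> piS /andP [i1 iN]; have spi := size_Sm piS.
have sp : size (pref i pi) = i by rewrite size_pref // spi.
rewrite /inA /is_prefix sp i1 iN (pref_Sm piS iN) /=.
congr (_ && ~~ _); apply/hasP/hasP.
  move=> [m mI /hasP [p' p'S /andP [/andP [cont neq] posp']]].
  move: cont; rewrite /contains sp (size_Sm p'S) => /andP [mi /eqP p'E].
  rewrite pref_pref // in p'E.
  have mni : m != i by apply: contraNneq neq => mi'; rewrite -p'E mi'.
  exists m; last by rewrite p'E.
  move: mI; rewrite !mem_iota => /andP [-> _] /=.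
  by rewrite add1n prednK // ltn_neqAle mni.
move=> [j jI posj]; move: jI; rewrite mem_iota add1n prednK // => /andP [j1 ji].
have jN : (j <= N)%N := leq_trans (ltnW ji) iN.
exists j; first by rewrite mem_iota j1 add1n ltnS jN.
apply/hasP; exists (pref j pi); first exact: pref_Sm piS jN.
rewrite posj andbT /contains size_pref ?spi // sp (ltnW ji) pref_pref ?(ltnW ji) //=.
rewrite eqxx /=; apply/eqP => jE; have := congr1 size jE.
by rewrite size_pref ?spi // sp => ji'; rewrite ji' ltnn in ji.
Qed.

Lemma inA_first { pi i0 i } : pi \in Sm N -> first_positive pi i0 ->
  (1 <= i <= N)%N -> A (pref i pi) = (i == i0).
Proof.
move=> piS [i0r i0p i0m] ir; rewrite inA_pref //.
case: (ltngtP i i0) => [lt|gt|->].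
- by rewrite (negbTE (i0m i _)) // (andP ir).1 lt.
- apply/negbTE; rewrite negb_and negbK; apply/orP; right.
  apply/hasP; exists i0 => //.
  by rewrite mem_iota (andP i0r).1 add1n prednK // (leq_trans _ gt).
- rewrite i0p /=; apply/hasPn => j; rewrite mem_iota add1n prednK ?(andP i0r).1 //.
  exact: i0m.
Qed.

Lemma inA_prefixedE { pi i0 } p : pi \in Sm N -> first_positive pi i0 ->
  A p && prefixed p pi = (p == pref i0 pi).
Proof.
move=> piS i0first; have [/andP [i01 i0N] _ _] := i0first.
apply/andP/eqP => [[Ap /eqP pi_p]|->].
  move: (Ap); rewrite /inA /is_prefix => /andP [/andP [/and3P [s1 sN _] _] _].
  by move: Ap; rewrite -pi_p (inA_first piS i0first) ?s1 // => /eqP ->.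
rewrite (inA_first piS i0first) ?i01 ?eqxx //.
by rewrite /prefixed size_pref ?(size_Sm piS).
Qed.

Lemma accepted_first pi i0 (tau : seq nat -> bool) : (1 <= i0 <= N)%N ->
  ((N <= i0)%N || tau (pref i0 pi)) ->
  (forall j, (1 <= j < i0)%N -> ~~ tau (pref j pi)) ->
  accepted N tau pi = i0.
Proof.
move=> /andP [i01 i0N] accept before.
rewrite /accepted (@find_nthP _ 0%N _ _ i0.-1); first by rewrite prednK.
- by rewrite size_iota prednK.
- by rewrite nth_iota ?add1n ?prednK.
move=> j ji; rewrite nth_iota; last first.
  by rewrite (leq_trans ji) // (leq_trans (leq_pred _) i0N).
rewrite negb_or -ltnNge add1n; move: ji; rewrite -ltnS prednK // => ji.
by rewrite (leq_trans ji) // before // ji.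
Qed.

Lemma accepted_A_positive { pi i0 } : pi \in Sm N -> first_positive pi i0 ->
  accepted N A pi = i0 /\ accepted N pos pi = i0.
Proof.
move=> piS i0first; have [i0r i0p i0m] := i0first.
split; apply: accepted_first => //; rewrite ?i0p ?orbT //.
  by rewrite (inA_first piS i0first) // eqxx orbT.
move=> j /andP [j1 ji].
rewrite (inA_first piS i0first) ?j1 ?(leq_trans (ltnW ji)) ?(andP i0r).2 //.
by rewrite neq_ltn ji.
Qed.

Lemma inA_unique pi : pi \in Sm N -> exists! p, A p /\ prefixed p pi.
Proof.
move=> piS; have [i0 i0first] := first_positive_exists piS.
exists (pref i0 pi); split.
  by apply/andP; rewrite (inA_prefixedE _ piS i0first).
by move=> p /andP; rewrite (inA_prefixedE _ piS i0first) => /eqP.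
Qed.

Lemma win_prob_A : win_prob N c theta A = win_prob N c theta pos.
Proof.
rewrite /win_prob big_seq_cond [X in _ = X / _]big_seq_cond; congr (_ / _).
apply: eq_bigl => pi /=; case: (boolP (pi \in Sm N)) => //= piS.
have [i0 i0first] := first_positive_exists piS.
by rewrite /wins; have [-> ->] := accepted_A_positive piS i0first.
Qed.

Lemma win_mass_A :
  \sum_(pi <- Sm N | wins N A pi) w pi =
  \sum_(m <- iota 1 N) \sum_(p <- Sm m | A p) DD p * SS p.
Proof.
have regroup m : \sum_(p <- Sm m | A p) DD p * SS p =
   \sum_(p <- Sm m) \sum_(pi <- Sm N) (if A p && winnable N p pi then w pi else 0).
  rewrite big_mkcond; apply: eq_bigr => p _; rewrite D_Sstrike /strike_mass.
  by case: (A p) => /=; [rewrite big_mkcond | rewrite big1].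
under [RHS]eq_bigr do rewrite regroup exchange_big.
rewrite [RHS]exchange_big /= big_mkcond big_seq [RHS]big_seq.
apply: eq_bigr => pi piS; have [i0 i0first] := first_positive_exists piS.
have [/andP [i01 i0N] _ _] := i0first.
have size_q0 : size (pref i0 pi) = i0 by rewrite size_pref ?(size_Sm piS).
have inner m : \sum_(p <- Sm m) (if A p && winnable N p pi then w pi else 0)
   = if (m == i0) then (if nth 0%N pi i0.-1 == N then w pi else 0) else 0.
  have -> : (m == i0) = (pref i0 pi \in Sm m).
    by apply/eqP/idP => [->|/size_Sm <-//]; apply: pref_Sm piS i0N.
  rewrite -sum_pred1 ?permutations_uniq //; apply: eq_big_seq => p pS.
  rewrite /winnable andbA (inA_prefixedE _ piS i0first).
  by case: eqP => // ->; rewrite size_q0.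
under eq_bigr do rewrite inner.
rewrite sum_pred1 ?iota_uniq // mem_iota i01 add1n ltnS i0N /=.
by rewrite /wins (accepted_A_positive piS i0first).1.
Qed.

End Game.

Theorem mainTheorem1 (R : realFieldType) (N : nat) (c : seq nat -> nat)
    (theta : R) (hN : (1 <= N)%N) (htheta : 0 < theta) :
  (forall pi, pi \in Sm N ->
     exists! p, inA N c theta p /\ prefixed p pi) /\
  (forall tau : seq nat -> bool,
     win_prob N c theta tau <= win_prob N c theta (inA N c theta)) /\
  win_prob N c theta (inA N c theta) = Sclosed N c theta [:: 1%N] /\
  win_prob N c theta (inA N c theta) =
    (\sum_(m <- iota 1 N) \sum_(p <- Sm m | inA N c theta p)
        D N c theta p * Sstrike N c theta p) / Ztot N c theta.
Proof.
have value_A : win_prob N c theta (inA N c theta) = Sclosed N c theta [:: 1%N].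
  by rewrite win_prob_A // win_prob_positive.
split; first by move=> pi; apply: inA_unique.
split; first by move=> tau; rewrite value_A; apply: win_prob_le.
split; first exact: value_A.
by rewrite /win_prob win_mass_A.
Qed.
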